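(* Let $H$ be a finite-dimensional real or complex Hilbert space with inner product $(\cdot,\cdot)$ and norm $\|u\|=(u,u)^{1/2}$, and let $A:H\to H$ be a self-adjoint operator with eigenvalues $0<\lambda_1\le\lambda_2\le\dots\le\lambda_K$, so that $A\ge \delta I$ with $\delta=\lambda_1>0$. Let $f$ be a real function defined and nonzero on $[\lambda_1,\lambda_K]$ with $f(\lambda_k)>0$ for all $k$, and write $f^{-1}(\lambda)=1/f(\lambda)$. For $\varphi\in H$ let $u=f^{-1}(A)\varphi$ be the solution of $f(A)u=\varphi$. Let $m\ge 1$ and let $a_i>0$, $b_i>0$, $i=1,\dots,m$, be such that the function $r(\lambda)=\sum_{i=1}^m a_i (b_i+\lambda)^{-1}$ satisfies $$|r(\lambda)-f^{-1}(\lambda)|\le \varepsilon\quad\text{for all }\lambda\in[\lambda_1,\lambda_K].$$ Let $w_i\in H$ be the solutions of $(b_iI+A)w_i=\varphi$, $i=1,\dots,m$, and let $\tilde w_i\in H$ satisfy $$\|\tilde w_i-w_i\|\le \varepsilon_i\|\varphi\|,\qquad \varepsilon_i=\frac{\varepsilon_0}{b_i+\delta},\quad i=1,\dots,m,$$ for some $\varepsilon_0\ge 0$. Define $\hat u=\sum_{i=1}^m a_i\tilde w_i$. Then $$\|\hat u-u\|\le\big(\varepsilon+\varepsilon_0\,(f^{-1}(\delta)+\varepsilon)\big)\|\varphi\|.$$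
   Context: Operator functions are defined spectrally: if $\psi_k$ ($\|\psi_k\|=1$) are orthonormal eigenvectors of $A$ with $A\psi_k=\lambda_k\psi_k$, then $g(A)u=\sum_{k=1}^K g(\lambda_k)(u,\psi_k)\psi_k$. In particular $f^{-1}(A)=\sum_k f(\lambda_k)^{-1}(\cdot,\psi_k)\psi_k$, and $f^{-1}(\delta)=1/f(\lambda_1)$. *)

(* R : realType, H = 'cV[R]_n (real case) or 'cV[R[i]]_n (complex case). *)
From mathcomp Require Import all_boot all_order all_algebra reals complex.
Set Implicit Arguments. Unset Strict Implicit. Unset Printing Implicit Defensive.
Import Order.TTheory GRing.Theory Num.Theory.
Local Open Scope ring_scope.
Local Open Scope complex_scope.

Section Defs.
Variable R : realType.

Definition dotR n (u v : 'cV[R]_n) : R := \sum_i u i 0 * v i 0.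
Definition normR n (u : 'cV[R]_n) : R := Num.sqrt (dotR u u).
(* spectral operator function g(A)u = sum_k g(lam_k) (u,psi_k) psi_k *)
Definition specR n (lam : 'I_n -> R) (psi : 'I_n -> 'cV[R]_n) (g : R -> R)
  (u : 'cV[R]_n) : 'cV[R]_n :=
  \sum_k (g (lam k) * dotR u (psi k)) *: psi k.

Definition dotC n (u v : 'cV[R[i]]_n) : R[i] := \sum_i u i 0 * (v i 0)^*.
Definition normC n (u : 'cV[R[i]]_n) : R := Num.sqrt (@complex.Re R (dotC u u)).
Definition adjC n (A : 'M[R[i]]_n) : 'M[R[i]]_n := map_mx (fun z => z^*) A^T.
Definition specC n (lam : 'I_n -> R) (psi : 'I_n -> 'cV[R[i]]_n) (g : R -> R)
  (u : 'cV[R[i]]_n) : 'cV[R[i]]_n :=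
  \sum_k ((g (lam k))%:C * dotC u (psi k)) *: psi k.

Definition ratf m (a b : 'I_m -> R) (x : R) : R := \sum_i a i / (b i + x).

End Defs.

From HB Require Import structures.
From mathcomp Require Import all_boot all_order all_algebra reals complex.
From mathcomp Require Import sesquilinear ring.
Set Implicit Arguments.
Unset Strict Implicit.
Unset Printing Implicit Defensive.
Import Order.TTheory GRing.Theory Num.Theory Num.Def.
Local Open Scope ring_scope.
Local Open Scope complex_scope.

(* In the orthonormal eigenbasis (psi_k) of A every w_i = (b_i + A)^-1 phi and
   u = f^-1(A) phi are diagonal, so sum_i a_i w_i - u = (r - f^-1)(A) phi, whose
   norm is at most eps |phi| by Parseval.  The perturbation
   sum_i a_i (wt_i - w_i) has norm at most
   sum_i a_i eps0 / (b_i + delta) |phi| = eps0 r(delta) |phi|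
   <= eps0 (f^-1(delta) + eps) |phi| by the triangle inequality.  The estimate
   holds in any finite-dimensional complex inner product space; the real case
   follows by complexification, which preserves inner products. *)

Section DotSpace.
Variables (C : numClosedFieldType) (U : vectType C) (form : {dot U for conjC}).
Local Notation "''[' u , v ]" := (form u v) : ring_scope.
Local Notation "''[' u ]" := (form u u) : ring_scope.

Lemma sqrt_dnormZ a u : sqrtC '[a *: u] = `|a| * sqrtC '[u].
Proof.
by rewrite dnormZ sqrtCM ?nnegrE ?exprn_ge0 ?dnorm_ge0 // sqrCK.
Qed.

Lemma sqrt_dnormD_le u v : sqrtC '[u + v] <= sqrtC '[u] + sqrtC '[v].
Proof. exact: (triangle_lerif form u v).1. Qed.

Lemma sqrt_dnorm_sum_le (I : finType) (F : I -> U) :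
  sqrtC '[\sum_i F i] <= \sum_i sqrtC '[F i].
Proof.
elim/big_ind2: _ => [|x u y v hu hv|//]; first by rewrite linear0l sqrtC0.
exact: le_trans (sqrt_dnormD_le u v) (lerD hu hv).
Qed.

Variables (N : nat) (psi : 'I_N -> U).
Hypothesis psi_orthonormal : forall j k, '[psi j, psi k] = (j == k)%:R.
Hypothesis dim_U : \dim {:U} = N.

Lemma dot_sum_basis (x : 'I_N -> C) j : '[\sum_k x k *: psi k, psi j] = x j.
Proof.
rewrite linear_sumlz (bigD1 j) //= big1 => [|k /negPf njk]; last first.
  by rewrite linearZl_LR /= psi_orthonormal njk mulr0.
by rewrite linearZl_LR /= psi_orthonormal eqxx mulr1 addr0.
Qed.

Lemma dnorm_sum_basis (x : 'I_N -> C) : '[\sum_k x k *: psi k] = \sum_k `|x k| ^+ 2.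
Proof.
rewrite linear_sumlz; apply: eq_bigr => k _.
by rewrite linearZl_LR /= hermC /= dot_sum_basis expr0 mul1r normCK.
Qed.

Lemma orthonormal_inj : injective psi.
Proof.
move=> j k ejk; have := psi_orthonormal j k; rewrite ejk psi_orthonormal eqxx.
by case: (j =P k) => // _ /eqP; rewrite oner_eq0.
Qed.

Lemma basis_expansion u : u = \sum_k '[u, psi k] *: psi k.
Proof.
pose X := [tuple psi k | k < N].
have Xk (k : 'I_N) : X`_k = psi k by rewrite -tnth_nth tnth_mktuple.
have freeX : free X.
  apply: (orthonormal_free (form := form)); apply/orthonormalP; split.
    by rewrite map_inj_uniq ?enum_uniq //; exact: orthonormal_inj.
  move=> _ _ /mapP[j _ ->] /mapP[k _ ->].
  by rewrite psi_orthonormal (inj_eq orthonormal_inj).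
have basisX : basis_of fullv X by rewrite basisEfree freeX subvf size_tuple dim_U /=.
have defu : u = \sum_k coord X k u *: psi k.
  by rewrite {1}(coord_basis basisX (memvf u)); apply: eq_bigr => k _; rewrite Xk.
rewrite {1}defu; apply: eq_bigr => k _.
by rewrite [in RHS]defu dot_sum_basis.
Qed.

Definition diag_op (c : 'I_N -> C) u := \sum_k (c k * '[u, psi k]) *: psi k.

Lemma diag_opB c d u : diag_op c u - diag_op d u = diag_op (fun k => c k - d k) u.
Proof.
by rewrite /diag_op -sumrB; apply: eq_bigr => k _; rewrite -scalerBl mulrBl.
Qed.

Lemma diag_op_sum m (a : 'I_m -> C) (c : 'I_m -> 'I_N -> C) u :
  \sum_i a i *: diag_op (c i) u = diag_op (fun k => \sum_i a i * c i k) u.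
Proof.
rewrite /diag_op (eq_bigr _ (fun i _ => scaler_sumr _ _ _ _)) exchange_big /=.
apply: eq_bigr => k _; rewrite mulr_suml scaler_suml.
by apply: eq_bigr => i _; rewrite scalerA mulrA.
Qed.

Lemma sqrt_dnorm_diag_op_le c e u : 0 <= e -> (forall k, `|c k| <= e) ->
  sqrtC '[diag_op c u] <= e * sqrtC '[u].
Proof.
move=> e_ge0 ce; rewrite -[e]sqrCK // -sqrtCM ?nnegrE ?exprn_ge0 ?dnorm_ge0 //.
rewrite ler_sqrtC ?nnegrE ?mulr_ge0 ?exprn_ge0 ?dnorm_ge0 //.
rewrite [in X in _ <= _ * X](basis_expansion u) !dnorm_sum_basis mulr_sumr.
apply: ler_sum => k _; rewrite normrM exprMn ler_wpM2r ?exprn_ge0 //.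
by rewrite lerXn2r ?nnegrE.
Qed.

Lemma resolvent_diag_op (A : {linear U -> U}) (lam : 'I_N -> C) b w phi :
  (forall k, A (psi k) = lam k *: psi k) -> (forall k, b + lam k != 0) ->
  b *: w + A w = phi -> w = diag_op (fun k => (b + lam k)^-1) phi.
Proof.
move=> eigen nz_shift def_phi.
have Aw : A w = \sum_k (lam k * '[w, psi k]) *: psi k.
  rewrite {1}(basis_expansion w) linear_sum; apply: eq_bigr => k _.
  by rewrite linearZ /= eigen scalerA mulrC.
rewrite {1}(basis_expansion w); apply: eq_bigr => k _; congr (_ *: _).
rewrite -def_phi linearDl /= linearZl_LR /= Aw dot_sum_basis -mulrDl.
by rewrite mulKf.
Qed.

Theorem approx_resolvent_sum_error (A : {linear U -> U}) (lam g : 'I_N -> C)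
    m (a b : 'I_m -> C) (delta eps eps0 : C) phi (w wt : 'I_m -> U) :
  (forall k, A (psi k) = lam k *: psi k) -> (forall k, delta <= lam k) ->
  (forall i, 0 <= a i) -> (forall i, 0 < b i + delta) ->
  0 <= eps -> (forall k, `|\sum_i a i / (b i + lam k) - g k| <= eps) ->
  (forall i, b i *: w i + A (w i) = phi) ->
  (forall i, sqrtC '[wt i - w i] <= eps0 / (b i + delta) * sqrtC '[phi]) ->
  sqrtC '[\sum_i a i *: wt i - diag_op g phi]
    <= (eps + eps0 * \sum_i a i / (b i + delta)) * sqrtC '[phi].
Proof.
move=> eigen delta_le a_ge0 shift_gt0 eps_ge0 approx def_phi wt_err.
have w_diag i : w i = diag_op (fun k => (b i + lam k)^-1) phi.
  apply: resolvent_diag_op eigen _ (def_phi i) => k.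
  by rewrite gt_eqF // (lt_le_trans (shift_gt0 i)) ?lerD2l.
have sum_w : \sum_i a i *: w i = diag_op (fun k => \sum_i a i / (b i + lam k)) phi.
  by rewrite -diag_op_sum; apply: eq_bigr => i _; rewrite -w_diag.
have -> : \sum_i a i *: wt i - diag_op g phi =
    \sum_i a i *: (wt i - w i) + diag_op (fun k => \sum_i a i / (b i + lam k) - g k) phi.
  rewrite -diag_opB -sum_w addrA -big_split /=; congr (_ - _).
  by apply: eq_bigr => i _; rewrite -scalerDr subrK.
apply: le_trans (sqrt_dnormD_le _ _) _; rewrite mulrDl [X in _ <= X]addrC lerD //.
  apply: le_trans (sqrt_dnorm_sum_le _) _; rewrite mulr_sumr mulr_suml.
  apply: ler_sum => i _; rewrite sqrt_dnormZ ger0_norm //.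
  have -> : eps0 * (a i / (b i + delta)) * sqrtC '[phi]
      = a i * (eps0 / (b i + delta) * sqrtC '[phi]) by ring.
  exact: ler_wpM2l.
exact: sqrt_dnorm_diag_op_le.
Qed.
End DotSpace.

Section ComplexColumns.
Variables (R : realType) (n : nat).
Implicit Types u v : 'cV[R[i]]_n.

Lemma dotC_linearl v : linear (fun u => dotC u v).
Proof.
move=> c u1 u2; rewrite /dotC scaler_sumr -big_split /=.
by apply: eq_bigr => i _; rewrite !mxE mulrDl; congr (_ + _); apply: esym; apply: mulrA.
Qed.

Lemma dotC_linearr u : linear_for (conjC \; *%R) (dotC u).
Proof.
move=> c v1 v2; rewrite /dotC /= mulr_sumr -big_split /=.
by apply: eq_bigr => i _; rewrite !mxE rmorphD rmorphM /= mulrDr mulrCA.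
Qed.

Lemma dotC_hermitian u v : dotC u v = (-1) ^+ false * conjC (dotC v u).
Proof.
rewrite expr0 mul1r /dotC rmorph_sum; apply: eq_bigr => i _.
by rewrite rmorphM /= conjCK mulrC.
Qed.

Lemma dotC_gt0 u : u != 0 -> 0 < dotC u u.
Proof.
move=> u_neq0; have [i ui_neq0] : exists i, u i 0 != 0.
  apply/existsP; apply: contraNT u_neq0; rewrite negb_exists => /forallP u0.
  by apply/eqP/colP => i; rewrite mxE; apply/eqP; rewrite -[_ == _]negbK u0.
rewrite /dotC (bigD1 i) //= ltr_wpDr ?mul_conjC_gt0 //.
by rewrite sumr_ge0 // => j _; rewrite mul_conjC_ge0.
Qed.

HB.instance Definition _ :=
  bilinear_isBilinear.Build R[i] 'cV[R[i]]_n 'cV[R[i]]_n R[i]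
    *%R (conjC \; *%R) (@dotC R n) (dotC_linearl, dotC_linearr).
HB.instance Definition _ :=
  isHermitianSesquilinear.Build R[i] 'cV[R[i]]_n false conjC (@dotC R n) dotC_hermitian.
HB.instance Definition _ := isDotProduct.Build R[i] 'cV[R[i]]_n (@dotC R n) dotC_gt0.

Lemma normC_sqrtC u : (normC u)%:C = sqrtC (dotC u u).
Proof.
have uu_ge0 : 0 <= dotC u u := dnorm_ge0 (@dotC R n) u.
rewrite /normC -[in RHS](RRe_real (ger0_real uu_ge0)).
rewrite -[in RHS](@sqr_sqrtr _ (complex.Re _)) -?lecR ?RRe_real ?ger0_real //.
by rewrite rmorphXn sqrCK // lecR sqrtr_ge0.
Qed.

Lemma normc_real (x : R) : `|x%:C| = `|x|%:C.
Proof. by rewrite normc_def /= expr0n addr0 sqrtr_sqr. Qed.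

Lemma dim_cV : \dim {:'cV[R[i]]_n} = n.
Proof. by rewrite dimvf /dim /= muln1. Qed.

Lemma ratf_complex m (a b : 'I_m -> R) (x : R) :
  (ratf a b x)%:C = \sum_i (a i)%:C / ((b i)%:C + x%:C).
Proof.
by rewrite rmorph_sum; apply: eq_bigr => i _; rewrite rmorphM fmorphV rmorphD.
Qed.
End ComplexColumns.

Lemma spectral_error_complex (R : realType) n (A : 'M[R[i]]_n.+1) (lam : 'I_n.+1 -> R)
    (psi : 'I_n.+1 -> 'cV[R[i]]_n.+1) (f : R -> R) (phi : 'cV[R[i]]_n.+1)
    m (a b : 'I_m -> R) (eps eps0 : R) (w wt : 'I_m -> 'cV[R[i]]_n.+1) :
  (forall j k, dotC (psi j) (psi k) = (j == k)%:R) ->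
  (forall k, A *m psi k = (lam k)%:C *: psi k) ->
  (forall j k : 'I_n.+1, (j <= k)%N -> lam j <= lam k) ->
  0 < lam ord0 -> (forall i, 0 < a i) -> (forall i, 0 < b i) ->
  (forall x, lam ord0 <= x <= lam ord_max -> `|ratf a b x - (f x)^-1| <= eps) ->
  (forall i, (b i)%:C%:M *m w i + A *m w i = phi) ->
  0 <= eps0 ->
  (forall i, normC (wt i - w i) <= eps0 / (b i + lam ord0) * normC phi) ->
  normC (\sum_i (a i)%:C *: wt i - specC lam psi (fun x => (f x)^-1) phi)
    <= (eps + eps0 * ((f (lam ord0))^-1 + eps)) * normC phi.
Proof.
move=> psi_orthonormal eigen lam_mono lam0_gt0 a_gt0 b_gt0 approx def_phi eps0_ge0 wt_err.
have lam_range k : lam ord0 <= lam k <= lam ord_max by rewrite !lam_mono ?leq_ord.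
have eps_ge0 : 0 <= eps := le_trans (normr_ge0 _) (approx _ (lam_range ord0)).
have ratf_lam0 : ratf a b (lam ord0) <= (f (lam ord0))^-1 + eps.
  by have := approx _ (lam_range ord0); rewrite ler_distlC => /andP[+ _]; rewrite lerBlDr.
apply: (@le_trans _ _ ((eps + eps0 * ratf a b (lam ord0)) * normC phi)); last first.
  by rewrite ler_wpM2r ?sqrtr_ge0 // lerD2l ler_wpM2l.
rewrite -lecR rmorphM rmorphD rmorphM /= !normC_sqrtC ratf_complex.
apply: (approx_resolvent_sum_error psi_orthonormal (dim_cV _ _) eigen) => //.
- by move=> k; rewrite lecR; case/andP: (lam_range k).
- by move=> i; rewrite ler0c ltW ?a_gt0.
- by move=> i; rewrite -rmorphD ltcR addr_gt0 ?b_gt0 ?lam0_gt0.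
- by rewrite ler0c.
- by move=> k; rewrite -ratf_complex -rmorphB normc_real lecR approx.
- by move=> i; rewrite -mul_scalar_mx; exact: def_phi.
- by move=> i; rewrite -!normC_sqrtC -rmorphD -fmorphV -!rmorphM lecR wt_err.
Qed.

Local Notation emb R := (map_mx (real_complex R)).

Section Complexification.
Variables (R : realType) (n : nat).

Lemma dotC_emb (u v : 'cV[R]_n) : dotC (emb R u) (emb R v) = (dotR u v)%:C.
Proof.
rewrite /dotC /dotR rmorph_sum; apply: eq_bigr => i _.
by rewrite !mxE rmorphM /=; congr (_ * _); exact: conjc_real.
Qed.

Lemma normC_emb (u : 'cV[R]_n) : normC (emb R u) = normR u.
Proof. by rewrite /normC dotC_emb. Qed.

Lemma specC_emb lam (psi : 'I_n -> 'cV[R]_n) g phi :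
  specC lam (fun k => emb R (psi k)) g (emb R phi) = emb R (specR lam psi g phi).
Proof.
rewrite /specC /specR map_mx_sum; apply: eq_bigr => k _.
by rewrite map_mxZ rmorphM dotC_emb.
Qed.
End Complexification.

Lemma spectral_error_real (R : realType) n (A : 'M[R]_n.+1) (lam : 'I_n.+1 -> R)
    (psi : 'I_n.+1 -> 'cV[R]_n.+1) (f : R -> R) (phi : 'cV[R]_n.+1)
    m (a b : 'I_m -> R) (eps eps0 : R) (w wt : 'I_m -> 'cV[R]_n.+1) :
  (forall j k, dotR (psi j) (psi k) = (j == k)%:R) ->
  (forall k, A *m psi k = lam k *: psi k) ->
  (forall j k : 'I_n.+1, (j <= k)%N -> lam j <= lam k) ->
  0 < lam ord0 -> (forall i, 0 < a i) -> (forall i, 0 < b i) ->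
  (forall x, lam ord0 <= x <= lam ord_max -> `|ratf a b x - (f x)^-1| <= eps) ->
  (forall i, (b i)%:M *m w i + A *m w i = phi) ->
  0 <= eps0 ->
  (forall i, normR (wt i - w i) <= eps0 / (b i + lam ord0) * normR phi) ->
  normR (\sum_i a i *: wt i - specR lam psi (fun x => (f x)^-1) phi)
    <= (eps + eps0 * ((f (lam ord0))^-1 + eps)) * normR phi.
Proof.
move=> psi_orthonormal eigen lam_mono lam0_gt0 a_gt0 b_gt0 approx def_phi eps0_ge0 wt_err.
have sum_emb : \sum_i (a i)%:C *: emb R (wt i) = emb R (\sum_i a i *: wt i).
  by rewrite map_mx_sum; apply: eq_bigr => i _; rewrite map_mxZ.
rewrite -!normC_emb map_mxB -specC_emb -sum_emb.
apply: (spectral_error_complex (A := emb R A) (w := fun i => emb R (w i))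
          _ _ lam_mono lam0_gt0 a_gt0 b_gt0 approx _ eps0_ge0).
- by move=> j k; rewrite dotC_emb psi_orthonormal rmorph_nat.
- by move=> k; rewrite -map_mxM eigen map_mxZ.
- by move=> i; rewrite -map_scalar_mx -!map_mxM -map_mxD def_phi.
- by move=> i; rewrite -map_mxB !normC_emb wt_err.
Qed.

Theorem theorem1 (R : realType) :
  (* real Hilbert space *)
  (forall (n : nat) (A : 'M[R]_n.+1) (lam : 'I_n.+1 -> R)
     (psi : 'I_n.+1 -> 'cV[R]_n.+1) (f : R -> R) (phi : 'cV[R]_n.+1)
     (m : nat) (a b : 'I_m -> R) (eps eps0 : R)
     (w wt : 'I_m -> 'cV[R]_n.+1),
   A^T = A ->
   (forall j k, dotR (psi j) (psi k) = (j == k)%:R) ->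
   (forall k, A *m psi k = lam k *: psi k) ->
   (forall j k : 'I_n.+1, (j <= k)%N -> lam j <= lam k) ->
   0 < lam ord0 ->
   (forall x, lam ord0 <= x <= lam ord_max -> f x != 0) ->
   (forall k, 0 < f (lam k)) ->
   (0 < m)%N ->
   (forall i, 0 < a i) -> (forall i, 0 < b i) ->
   (forall x, lam ord0 <= x <= lam ord_max -> `|ratf a b x - (f x)^-1| <= eps) ->
   (forall i, (b i)%:M *m w i + A *m w i = phi) ->
   0 <= eps0 ->
   (forall i, normR (wt i - w i) <= eps0 / (b i + lam ord0) * normR phi) ->
   normR (\sum_i a i *: wt i - specR lam psi (fun x => (f x)^-1) phi)
     <= (eps + eps0 * ((f (lam ord0))^-1 + eps)) * normR phi)
  /\
  (* complex Hilbert space *)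
  (forall (n : nat) (A : 'M[R[i]]_n.+1) (lam : 'I_n.+1 -> R)
     (psi : 'I_n.+1 -> 'cV[R[i]]_n.+1) (f : R -> R) (phi : 'cV[R[i]]_n.+1)
     (m : nat) (a b : 'I_m -> R) (eps eps0 : R)
     (w wt : 'I_m -> 'cV[R[i]]_n.+1),
   adjC A = A ->
   (forall j k, dotC (psi j) (psi k) = (j == k)%:R) ->
   (forall k, A *m psi k = (lam k)%:C *: psi k) ->
   (forall j k : 'I_n.+1, (j <= k)%N -> lam j <= lam k) ->
   0 < lam ord0 ->
   (forall x, lam ord0 <= x <= lam ord_max -> f x != 0) ->
   (forall k, 0 < f (lam k)) ->
   (0 < m)%N ->
   (forall i, 0 < a i) -> (forall i, 0 < b i) ->
   (forall x, lam ord0 <= x <= lam ord_max -> `|ratf a b x - (f x)^-1| <= eps) ->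
   (forall i, (b i)%:C%:M *m w i + A *m w i = phi) ->
   0 <= eps0 ->
   (forall i, normC (wt i - w i) <= eps0 / (b i + lam ord0) * normC phi) ->
   normC (\sum_i (a i)%:C *: wt i - specC lam psi (fun x => (f x)^-1) phi)
     <= (eps + eps0 * ((f (lam ord0))^-1 + eps)) * normC phi).
Proof.
split=> n A lam psi f phi m a b eps eps0 w wt _
  psi_orthonormal eigen lam_mono lam0_gt0 _ _ _.
  exact: spectral_error_real psi_orthonormal eigen lam_mono lam0_gt0.
exact: spectral_error_complex psi_orthonormal eigen lam_mono lam0_gt0.
Qed.
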